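(* Let $\mathcal{A}$ be a primal algebra and let $<$ be a linear order on its universe $A$. Then the class of objects of $\mathbf{OV}_{\mathit{fin}}(\mathcal{A},<)$ has the hereditary property: every substructure of an object of $\mathbf{OV}_{\mathit{fin}}(\mathcal{A},<)$ is itself an object of $\mathbf{OV}_{\mathit{fin}}(\mathcal{A},<)$.
   Context: A primal algebra is a finite algebra with at least two elements in which every finitary operation on its universe is a term operation. For a linear order $<$ on $A$ and a positive integer $n$, the antilexicographic order $\sqsubset$ on $A^n$ is: $(x_1,\dots,x_n)\sqsubset(y_1,\dots,y_n)$ iff there is $s$ with $x_t=y_t$ for all $t>s$ and $x_s<y_s$. For a permutation $\pi$ of $\{1,\dots,n\}$, $\bar x\sqsubset_\pi\bar y$ iff $(x_{\pi(1)},\dots,x_{\pi(n)})\sqsubset(y_{\pi(1)},\dots,y_{\pi(n)})$; $\sqsubseteq_\pi$ is its reflexive version and $\mathcal{A}^n_{\sqsubseteq_\pi}$ is the power algebra $\mathcal{A}^n$ expanded by the relation $\sqsubseteq_\pi$. $\mathbf{OV}_{\mathit{fin}}(\mathcal{A},<)$ is the category whose objects are all structures isomorphic to some $\mathcal{A}^n_{\sqsubseteq_\pi}$ ($n$ a positive integer, $\pi$ a permutation of $\{1,\dots,n\}$) and whose morphisms are embeddings (injective maps preserving the operations and preserving and reflecting the order relation). A substructure is a subset closed under the operations, with the induced operations and order. *)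

From mathcomp Require Import all_boot all_order.
From mathcomp Require Import perm.
Set Implicit Arguments. Unset Strict Implicit. Unset Printing Implicit Defensive.

Section Defs.
Variables (I : Type) (ar : I -> nat).

Inductive term (V : Type) : Type :=
| Var : V -> term V
| App : forall i : I, ('I_(ar i) -> term V) -> term V.

Fixpoint eval_term (X : Type) (ops : forall i, ('I_(ar i) -> X) -> X)
    (V : Type) (v : V -> X) (t : term V) : X :=
  match t with
  | Var x => v x
  | App i ts => ops i (fun j => eval_term ops v (ts j))
  end.

Definition primal (A : finType) (ops : forall i, ('I_(ar i) -> A) -> A) : Prop :=
  (2 <= #|A|)%N /\
  forall (n : nat) (f : ('I_n.+1 -> A) -> A),
    exists t : term 'I_n.+1, forall x : 'I_n.+1 -> A, eval_term ops x t = f x.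

Definition strict_linear_order (A : Type) (lt : rel A) : Prop :=
  (forall a, ~~ lt a a) /\
  (forall a b c, lt a b -> lt b c -> lt a c) /\
  (forall a b, a <> b -> lt a b \/ lt b a).

Record structure := Structure {
  carrier :> Type;
  sops : forall i, ('I_(ar i) -> carrier) -> carrier;
  srel : carrier -> carrier -> Prop
}.
Arguments sops : clear implicits.
Arguments srel : clear implicits.

Definition is_iso (S T : structure) (f : S -> T) : Prop :=
  bijective f /\
  (forall i (x : 'I_(ar i) -> S), f (sops S i x) = sops T i (fun j => f (x j))) /\
  (forall a b : S, srel S a b <-> srel T (f a) (f b)).

Definition isomorphic (S T : structure) : Prop := exists f : S -> T, is_iso f.

Definition op_closed (S : structure) (P : S -> Prop) : Prop :=
  forall i (x : 'I_(ar i) -> S), (forall j, P (x j)) -> P (sops S i x).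

Definition substructure (S : structure) (P : S -> Prop) (HP : op_closed P)
  : structure :=
  @Structure {x : S | P x}
    (fun i x => exist P (sops S i (fun j => sval (x j)))
                      (HP i _ (fun j => proj2_sig (x j))))
    (fun a b => srel S (sval a) (sval b)).

Definition antilex (A : Type) (lt : rel A) (n : nat) (x y : 'I_n -> A) : Prop :=
  exists s : 'I_n, (forall t : 'I_n, (s < t)%N -> x t = y t) /\ lt (x s) (y s).

Definition antilex_perm (A : Type) (lt : rel A) (n : nat) (pi : {perm 'I_n})
    (x y : 'I_n -> A) : Prop :=
  antilex lt (fun t => x (pi t)) (fun t => y (pi t)).

Definition antilex_perm_le (A : Type) (lt : rel A) (n : nat) (pi : {perm 'I_n})
    (x y : 'I_n -> A) : Prop :=
  x = y \/ antilex_perm lt pi x y.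

Definition power_struct (A : finType) (ops : forall i, ('I_(ar i) -> A) -> A)
    (lt : rel A) (n : nat) (pi : {perm 'I_n}) : structure :=
  @Structure {ffun 'I_n -> A}
    (fun i x => [ffun k => ops i (fun j => x j k)])
    (fun a b => antilex_perm_le lt pi a b).

Definition OV_fin_object (A : finType) (ops : forall i, ('I_(ar i) -> A) -> A)
    (lt : rel A) (S : structure) : Prop :=
  exists (n : nat) (pi : {perm 'I_n.+1}), isomorphic S (power_struct ops lt pi).

End Defs.

(* Permuting coordinates, we may assume pi = 1.  A subuniverse Q of A^n is
   then determined by its kernel, the equivalence "coordinates i and j agree on
   every element of Q": since A is primal, a tuple constant on the kernel
   classes is a term operation applied to the columns of Q, hence lies in Q.
   So Q is isomorphic to A^m, m the number of classes, by restriction to one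
   coordinate per class.  Choosing the largest coordinate of each class, the
   restriction preserves and reflects the antilexicographic order, because the
   last coordinate where two elements of Q differ is the largest of its class. *)

From mathcomp Require Import all_boot all_order.
From mathcomp Require Import perm.
From mathcomp Require Import boolp.
Set Implicit Arguments. Unset Strict Implicit. Unset Printing Implicit Defensive.

Section Isomorphisms.
Variables (I : Type) (ar : I -> nat).

Lemma isomorphic_trans (S T U : structure ar) :
  isomorphic S T -> isomorphic T U -> isomorphic S U.
Proof.
move=> [f [[g fK gK] [f_ops f_rel]]] [f' [[g' fK' gK'] [f_ops' f_rel']]].
exists (f' \o f); split; first by exists (g \o g') => x /=; rewrite ?fK ?fK' ?gK ?gK'.
split; first by move=> i x /=; rewrite f_ops f_ops'.
by move=> a b /=; rewrite f_rel f_rel'.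
Qed.

Lemma isomorphic_substructure (S T : structure ar) (P : S -> Prop)
    (HP : op_closed P) :
  isomorphic S T -> (exists x, P x) ->
  exists (Q : T -> Prop) (HQ : op_closed Q),
    (exists y, Q y) /\ isomorphic (substructure HP) (substructure HQ).
Proof.
move=> [f [[g fK gK] [f_ops f_rel]]] [x Px].
have HQ : op_closed (fun y => P (g y)).
  move=> i y Py; have -> : sops y = f (sops (fun j => g (y j))).
    by rewrite f_ops; under [fun j => f _]eq_fun do rewrite gK.
  by rewrite fK; apply: HP.
exists (fun y => P (g y)), HQ; split; first by exists (f x); rewrite fK.
pose F (a : substructure HP) : substructure HQ :=
  exist _ (f (sval a)) (eq_ind_r P (proj2_sig a) (fK (sval a))).
pose G (b : substructure HQ) : substructure HP := exist P (g (sval b)) (proj2_sig b).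
exists F; split.
  by exists G => [[a Pa]|[b Qb]]; apply: eq_exist; rewrite /= ?fK ?gK.
split; last by move=> a b; apply: f_rel.
by move=> i a; apply: eq_exist; rewrite /= f_ops.
Qed.

End Isomorphisms.

Section PowerStructures.
Variables (I : Type) (ar : I -> nat) (A : finType)
  (ops : forall i, ('I_(ar i) -> A) -> A) (lt : rel A).

Lemma ffun_eq_fun (aT : finType) (rT : Type) (a b : {ffun aT -> rT}) :
  (a = b :> (aT -> rT)) <-> a = b.
Proof. by split=> [ab | -> //]; apply/ffunP => t; rewrite ab. Qed.

Lemma antilex_perm1 n (x y : 'I_n -> A) :
  antilex_perm lt 1 x y <-> antilex lt x y.
Proof.
rewrite /antilex_perm; under [fun t => x _]funext do rewrite perm1.
by under [fun t => y _]funext do rewrite perm1.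
Qed.

Lemma power_struct_perm1 n (pi : {perm 'I_n}) :
  isomorphic (power_struct ops lt pi) (power_struct ops lt (1 : {perm 'I_n})).
Proof.
pose f (x : {ffun 'I_n -> A}) : {ffun 'I_n -> A} := [ffun t => x (pi t)].
pose g (y : {ffun 'I_n -> A}) : {ffun 'I_n -> A} := [ffun t => y ((pi^-1)%g t)].
have fK : cancel f g by move=> x; apply/ffunP => t; rewrite !ffunE permKV.
have gK : cancel g f by move=> y; apply/ffunP => t; rewrite !ffunE permK.
exists f; split; first by exists g.
split=> [i x | a b].
  by apply/ffunP => t; rewrite /= !ffunE; congr ops; apply: funext => j; rewrite ffunE.
rewrite /= /antilex_perm_le antilex_perm1 /antilex_perm.
have -> : (fun t => a (pi t)) = f a by apply: funext => t; rewrite ffunE.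
have -> : (fun t => b (pi t)) = f b by apply: funext => t; rewrite ffunE.
have f_eq : a = b <-> f a = f b by split=> [-> // | /(can_inj fK)].
by rewrite !ffun_eq_fun f_eq.
Qed.

Section PrimalSubuniverse.
Variables (n : nat) (pi : {perm 'I_n}) (Q : {ffun 'I_n -> A} -> Prop).
Hypothesis HQ : op_closed (S := power_struct ops lt pi) Q.

Lemma op_closed_eval_term (V : Type) (h : V -> {ffun 'I_n -> A}) :
  (forall v, Q (h v)) ->
  forall t, Q [ffun i => eval_term ops (fun v => h v i) t].
Proof.
move=> Qh; elim=> [v | k ts IHts] /=.
  by have -> : [ffun i => h v i] = h v by apply/ffunP => i; rewrite ffunE.
have /HQ : forall j, Q [ffun i => eval_term ops (fun v => h v i) (ts j)] by [].
by congr Q; apply/ffunP => i; rewrite /= !ffunE; under eq_fun do rewrite ffunE.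
Qed.

Variable b0 : {ffun 'I_n -> A}.
Hypothesis Qb0 : Q b0.

(* The elements of Q listed by the fixed arity #|A^n|.+1, padded with b0. *)
Definition subuniverse_enum (j : 'I_#|{ffun 'I_n -> A}|.+1) : {ffun 'I_n -> A} :=
  let y := nth b0 (enum {ffun 'I_n -> A}) j in if pselect (Q y) then y else b0.

Lemma subuniverse_enumP j : Q (subuniverse_enum j).
Proof. by rewrite /subuniverse_enum; case: pselect. Qed.

Lemma subuniverse_enum_onto b : Q b -> exists j, subuniverse_enum j = b.
Proof.
move=> Qb; have ltb : index b (enum {ffun 'I_n -> A}) < #|{ffun 'I_n -> A}|.+1.
  by rewrite ltnS ltnW // cardE index_mem mem_enum.
by exists (Ordinal ltb); rewrite /subuniverse_enum /= nth_index ?mem_enum //; case: pselect.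
Qed.

Lemma primal_kernel_closed : primal ops ->
  forall x : {ffun 'I_n -> A},
    (forall i i', (forall b, Q b -> b i = b i') -> x i = x i') -> Q x.
Proof.
move=> [_ primA] x x_const.
pose col i j := subuniverse_enum j i.
pose f v := if [pick i | [forall j, col i j == v j]] is Some i then x i else v ord0.
have [t tf] := primA _ f.
have -> : x = [ffun i => eval_term ops (col i) t].
  apply/ffunP => i; rewrite ffunE tf /f; case: pickP => [i' /forallP same_col | /(_ i)].
    apply: x_const => b /subuniverse_enum_onto [j <-].
    by apply/esym/eqP/same_col.
  by move/negbT/negP; case; apply/forallP.
exact/op_closed_eval_term/subuniverse_enumP.
Qed.

End PrimalSubuniverse.

Section Kernel.
Variables (n : nat) (Q : {ffun 'I_n.+1 -> A} -> Prop).

Definition coord_eq (i j : 'I_n.+1) : bool := `[< forall b, Q b -> b i = b j >].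

Lemma coord_eqP i j : reflect (forall b, Q b -> b i = b j) (coord_eq i j).
Proof. exact: asboolP. Qed.

Lemma coord_eq_refl i : coord_eq i i.
Proof. exact/coord_eqP. Qed.

Lemma coord_eq_trans i j k : coord_eq i j -> coord_eq j k -> coord_eq i k.
Proof. by move=> /coord_eqP ij /coord_eqP jk; apply/coord_eqP => b Qb; rewrite ij ?jk. Qed.

Lemma coord_eq_sym i j : coord_eq i j -> coord_eq j i.
Proof. by move=> /coord_eqP ij; apply/coord_eqP => b Qb; rewrite ij. Qed.

Definition class_max (i : 'I_n.+1) : 'I_n.+1 := fintype.arg_max i (coord_eq i) val.

Lemma class_maxP (i : 'I_n.+1) :
  coord_eq i (class_max i) /\ forall j, coord_eq i j -> j <= class_max i.
Proof. by rewrite /class_max; case: fintype.arg_maxnP; first exact: coord_eq_refl. Qed.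

Lemma leq_class_max (i : 'I_n.+1) : i <= class_max i.
Proof. exact: (class_maxP i).2 (coord_eq_refl i). Qed.

Lemma class_max_eq (i j : 'I_n.+1) : coord_eq i j -> class_max i = class_max j.
Proof.
move=> ij; have [i_max le_i] := class_maxP i; have [j_max le_j] := class_maxP j.
apply/val_inj/eqP; rewrite eqn_leq le_j ?le_i //.
  exact: coord_eq_trans ij j_max.
exact: coord_eq_trans (coord_eq_sym ij) i_max.
Qed.

Lemma class_maxK (i : 'I_n.+1) : class_max (class_max i) = class_max i.
Proof. by rewrite -(class_max_eq (class_maxP i).1). Qed.

Lemma coord_class_max b (i : 'I_n.+1) : Q b -> b (class_max i) = b i.
Proof. by move=> Qb; have /coord_eqP -> := (class_maxP i).1. Qed.

Definition reps : seq 'I_n.+1 := [seq i <- enum 'I_n.+1 | class_max i == i].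

Lemma mem_reps (i : 'I_n.+1) : (i \in reps) = (class_max i == i).
Proof. by rewrite mem_filter mem_enum andbT. Qed.

Lemma class_max_reps (i : 'I_n.+1) : class_max i \in reps.
Proof. by rewrite mem_reps class_maxK. Qed.

Lemma reps_uniq : uniq reps.
Proof. by rewrite filter_uniq ?enum_uniq. Qed.

Lemma ltn_nth_reps c d : c < size reps -> d < size reps ->
  (nth ord0 reps c < nth ord0 reps d) = (c < d).
Proof.
have ltn_trans' : transitive (fun i j : 'I_n.+1 => i < j).
  by move=> ? ? ?; apply: ltn_trans.
have sorted_reps : sorted (fun i j : 'I_n.+1 => i < j) reps.
  apply: sorted_filter => //.
  by have := iota_ltn_sorted 0 n.+1; rewrite -val_enum_ord sorted_map.
move=> c_lt d_lt; case: (ltngtP c d) => [cd | dc | -> ]; last by rewrite ltnn.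
  exact: (sorted_ltn_nth ltn_trans' ord0 sorted_reps).
by apply/negbTE; rewrite -leqNgt ltnW // (sorted_ltn_nth ltn_trans' ord0 sorted_reps).
Qed.

Definition kernel_dim := (size reps).-1.

Lemma size_reps : size reps = kernel_dim.+1.
Proof. by rewrite prednK //; case: reps (class_max_reps ord0). Qed.

Definition restrict (x : {ffun 'I_n.+1 -> A}) : {ffun 'I_kernel_dim.+1 -> A} :=
  [ffun c : 'I_kernel_dim.+1 => x (nth ord0 reps c)].

Definition extend (z : {ffun 'I_kernel_dim.+1 -> A}) : {ffun 'I_n.+1 -> A} :=
  [ffun i => z (inord (index (class_max i) reps))].

Lemma extendK : cancel extend restrict.
Proof.
move=> z; apply/ffunP => c; rewrite !ffunE.
have c_lt : c < size reps by rewrite size_reps.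
have /eqP -> : class_max (nth ord0 reps c) == nth ord0 reps c.
  by rewrite -mem_reps mem_nth.
by rewrite index_uniq ?reps_uniq // inord_val.
Qed.

Lemma restrictK x : Q x -> extend (restrict x) = x.
Proof.
move=> Qx; apply/ffunP => i; rewrite !ffunE inordK; last first.
  by rewrite -size_reps index_mem class_max_reps.
by rewrite nth_index ?class_max_reps ?coord_class_max.
Qed.

Lemma extend_kernel z i i' :
  (forall b, Q b -> b i = b i') -> extend z i = extend z i'.
Proof. by move=> /coord_eqP ii'; rewrite !ffunE (class_max_eq ii'). Qed.

Hypothesis lt_irr : forall a, ~~ lt a a.

(* (->): the last coordinate s where a and b differ is the maximum of its
   class, since a and b agree beyond s but the maximum carries the same values. *)
Lemma antilex_restrict a b : Q a -> Q b ->
  antilex lt a b <-> antilex lt (restrict a) (restrict b).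
Proof.
move=> Qa Qb; split=> [[s [eq_after lt_s]] | [c [eq_after lt_c]]].
  have s_rep : s \in reps.
    rewrite mem_reps -val_eqE eqn_leq leq_class_max andbT leqNgt; apply/negP => s_lt.
    move: lt_s; rewrite -(coord_class_max s Qa) eq_after // coord_class_max //.
    by rewrite (negbTE (lt_irr _)).
  have s_lt : index s reps < kernel_dim.+1 by rewrite -size_reps index_mem.
  exists (Ordinal s_lt); rewrite !ffunE nth_index //; split=> // c c_gt.
  rewrite !ffunE eq_after // -{1}(nth_index ord0 s_rep) ltn_nth_reps ?index_mem //.
  by rewrite size_reps.
have c_lt : c < size reps by rewrite size_reps.
exists (nth ord0 reps c); move: lt_c; rewrite !ffunE; split=> // t t_gt.
have t_lt : index (class_max t) reps < kernel_dim.+1.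
  by rewrite -size_reps index_mem class_max_reps.
rewrite -(coord_class_max t Qa) -(coord_class_max t Qb).
have := eq_after (Ordinal t_lt); rewrite !ffunE nth_index ?class_max_reps //; apply.
rewrite /= -(ltn_nth_reps c_lt) ?index_mem ?class_max_reps // nth_index ?class_max_reps //.
exact: leq_trans t_gt (leq_class_max t).
Qed.

Lemma subuniverse_power_iso (HQ : op_closed (S := power_struct ops lt 1) Q) b0 :
  primal ops -> Q b0 ->
  isomorphic (substructure HQ) (power_struct ops lt (1 : {perm 'I_kernel_dim.+1})).
Proof.
move=> primA Qb0.
have Q_extend z : Q (extend z).
  by apply: (primal_kernel_closed HQ Qb0 primA) => i i'; apply: extend_kernel.
exists (fun a => restrict (sval a)); split.
  exists (fun z => exist Q (extend z) (Q_extend z)) => [[a Qa]|z]; last exact: extendK.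
  by apply: eq_exist; rewrite /= restrictK.
split=> [i x | [a Qa] [b Qb]].
  by apply/ffunP => c; rewrite /= !ffunE; congr ops; apply: funext => j; rewrite ffunE.
have restrict_eq : a = b <-> restrict a = restrict b.
  by split=> [-> // | ab]; rewrite -(restrictK Qa) ab restrictK.
by rewrite /= /antilex_perm_le !antilex_perm1 antilex_restrict // !ffun_eq_fun restrict_eq.
Qed.

End Kernel.

End PowerStructures.

Theorem lemma5p3 (I : Type) (ar : I -> nat) (A : finType)
    (ops : forall i, ('I_(ar i) -> A) -> A) (lt : rel A) :
  primal ops -> strict_linear_order lt ->
  forall (S : structure ar), OV_fin_object ops lt S ->
  forall (P : S -> Prop) (HP : op_closed P),
    (exists x, P x) ->
    OV_fin_object ops lt (substructure HP).
Proof.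
move=> primA [lt_irr _] S [n [pi S_iso]] P HP P_ne.
have S_iso1 := isomorphic_trans S_iso (power_struct_perm1 ops lt pi).
have [Q [HQ [[b0 Qb0] P_iso]]] := isomorphic_substructure HP S_iso1 P_ne.
exists (kernel_dim Q), 1%g.
exact: isomorphic_trans P_iso (subuniverse_power_iso lt_irr HQ primA Qb0).
Qed.
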